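(* Let $X$ be a topological space with topology $\mathcal T_X$. If there exists a base $\mathcal B$ of $X$ such that the family $\{\mathcal P\in[\mathcal B]^{\le\omega}:\mathcal P\subset_!\mathcal B\}$ contains a club, then the family $\{\mathcal P\in[\mathcal T_X]^{\le\omega}:\mathcal P\subset_!\mathcal T_X\}$ contains a club as well (i.e. $X$ is very I-favorable).
   Context: For a family $\mathcal P$ of open subsets of $X$ contained in a family $\mathcal Q$ of open subsets of $X$, write $\mathcal P\subset_!\mathcal Q$ if for every subfamily $\mathcal S\subset\mathcal P$ and every point $x\notin\operatorname{cl}_X\bigcup\mathcal S$ there exists $W\in\mathcal P$ with $x\in W$ and $W\cap\bigcup\mathcal S=\emptyset$. $[\mathcal Q]^{\le\omega}$ denotes the set of all countable subfamilies of $\mathcal Q$. A family $\mathcal C\subset[\mathcal Q]^{\le\omega}$ is a club if (i) for every increasing sequence $C_1\subset C_2\subset\cdots$ of members of $\mathcal C$, $\bigcup_nC_n\in\mathcal C$, and (ii) every $B\in[\mathcal Q]^{\le\omega}$ is contained in some $C\in\mathcal C$. A space $X$ is very I-favorable if $\{\mathcal P\in[\mathcal T_X]^{\le\omega}:\mathcal P\subset_!\mathcal T_X\}$ contains a club. *)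

From Stdlib Require Import Classical.

Definition set (X : Type) := X -> Prop.
Definition family (X : Type) := set X -> Prop.

Definition is_topology {X : Type} (T : family X) : Prop :=
  T (fun _ => True) /\
  (forall F : family X, (forall U, F U -> T U) ->
      T (fun x => exists U, F U /\ U x)) /\
  (forall U V, T U -> T V -> T (fun x => U x /\ V x)).

Definition cl {X : Type} (T : family X) (A : set X) : set X :=
  fun x => forall U, T U -> U x -> exists y, U y /\ A y.

Definition bigU {X : Type} (S : family X) : set X :=
  fun x => exists U, S U /\ U x.

Definition fsubset {X : Type} (P Q : family X) : Prop :=
  forall U, P U -> Q U.

Definition is_base {X : Type} (T B : family X) : Prop :=
  fsubset B T /\
  forall U x, T U -> U x -> exists V, B V /\ V x /\ (forall y, V y -> U y).

Definition countable_family {X : Type} (P : family X) : Prop :=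
  exists f : set X -> nat, forall A B, P A -> P B -> f A = f B -> A = B.

Definition ctbl_sub {X : Type} (Q : family X) : family X -> Prop :=
  fun P => fsubset P Q /\ countable_family P.

Definition sub_bang {X : Type} (T : family X) (P Q : family X) : Prop :=
  fsubset P Q /\
  forall S : family X, fsubset S P ->
    forall x, ~ cl T (bigU S) x ->
      exists W, P W /\ W x /\ (forall y, W y -> ~ bigU S y).

Definition is_club {X : Type} (Q : family X) (C : family X -> Prop) : Prop :=
  (forall P, C P -> ctbl_sub Q P) /\
  (forall Cs : nat -> family X,
     (forall n, C (Cs n)) -> (forall n, fsubset (Cs n) (Cs (S n))) ->
     C (fun U => exists n, Cs n U)) /\
  (forall B, ctbl_sub Q B -> exists P, C P /\ fsubset B P).

Definition contains_club {X : Type} (T Q : family X) : Prop :=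
  exists C, is_club Q C /\
    (forall P, C P -> ctbl_sub Q P /\ sub_bang T P Q).

Definition very_I_favorable {X : Type} (T : family X) : Prop :=
  contains_club T T.

(* Let C_B be the given club.  Call an open family P B-refining if any two
   intersecting members of P contain a nonempty common subset that is a basic
   member of P.  The club for T consists of the countable B-refining P whose
   trace P ∩ B lies in C_B.  Such a P satisfies P ⊂_! T: if x is not in the
   closure of ⋃S, it is not in the closure of the union of the basic members
   of P lying below members of S, so some W ∈ P ∩ B around x misses all of
   them, and B-refinement shows that W then misses ⋃S itself.  Cofinality is a
   closing-off argument: alternately enlarge the trace into C_B and add
   basic refinements of the pairwise intersections, countably often. *)

From Stdlib Require Import ClassicalEpsilon FunctionalExtensionality
  PropExtensionality Cantor Lia.

(* [countable_family] at an arbitrary type, so that pairs of sets can be counted. *)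
Definition countable {A : Type} (P : A -> Prop) : Prop :=
  exists f : A -> nat, forall a b, P a -> P b -> f a = f b -> a = b.

Lemma countable_sub {A : Type} (P Q : A -> Prop) :
  countable P -> (forall a, Q a -> P a) -> countable Q.
Proof. intros [f Hf] HQP. exists f. intros a b Ha Hb. apply Hf; auto. Qed.

Lemma countable_image {A A' : Type} (P : A -> Prop) (h : A -> A') :
  countable P -> countable (fun b => exists a, P a /\ b = h a).
Proof.
  intros [f Hf].
  set (preimage := fun b : A' => epsilon (inhabits (@None A))
     (fun o => match o with Some a => P a /\ b = h a | None => False end)).
  assert (Hpre : forall b, (exists a, P a /\ b = h a) ->
     match preimage b with Some a => P a /\ b = h a | None => False end).
  { intros b [a Ha]. apply epsilon_spec. exists (Some a). exact Ha. }
  exists (fun b => match preimage b with Some a => f a | None => 0 end).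
  intros b1 b2 H1 H2 E.
  pose proof (Hpre b1 H1) as Hpre1. pose proof (Hpre b2 H2) as Hpre2.
  destruct (preimage b1) as [a1|], (preimage b2) as [a2|]; try contradiction.
  destruct Hpre1 as [Pa1 ->], Hpre2 as [Pa2 ->].
  f_equal. apply Hf; auto.
Qed.

Lemma countable_prod {A A' : Type} (P : A -> Prop) (Q : A' -> Prop) :
  countable P -> countable Q -> countable (fun p : A * A' => P (fst p) /\ Q (snd p)).
Proof.
  intros [f Hf] [g Hg]. exists (fun p => to_nat (f (fst p), g (snd p))).
  intros [a1 b1] [a2 b2] [H1 H1'] [H2 H2'] E; cbn [fst snd] in *.
  apply (f_equal of_nat) in E. rewrite !cancel_of_to in E. injection E as E1 E2.
  f_equal; [apply Hf | apply Hg]; auto.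
Qed.

Definition seq_union {A : Type} (Ps : nat -> A -> Prop) : A -> Prop :=
  fun a => exists n, Ps n a.

Lemma countable_seq_union {A : Type} (Ps : nat -> A -> Prop) :
  (forall n, countable (Ps n)) -> countable (seq_union Ps).
Proof.
  intros H.
  destruct (choice _ H) as [F HF].
  set (index := fun a => epsilon (inhabits 0) (fun n => Ps n a)).
  assert (Hindex : forall a, seq_union Ps a -> Ps (index a) a).
  { intros a Ha. apply epsilon_spec. exact Ha. }
  exists (fun a => to_nat (index a, F (index a) a)).
  intros a b Ha Hb E.
  apply (f_equal of_nat) in E. rewrite !cancel_of_to in E. injection E as E1 E2.
  rewrite <- E1 in E2. apply (HF (index a)); auto.
  rewrite E1. apply Hindex; auto.
Qed.

Lemma countable_union {A : Type} (P Q : A -> Prop) :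
  countable P -> countable Q -> countable (fun a => P a \/ Q a).
Proof.
  intros HP HQ.
  apply countable_sub with (P := seq_union (fun n => match n with 0 => P | _ => Q end)).
  - apply countable_seq_union. intros [|n]; assumption.
  - intros a [Ha | Ha]; [exists 0 | exists 1]; assumption.
Qed.

Definition increasing {A : Type} (Ps : nat -> A -> Prop) : Prop :=
  forall n a, Ps n a -> Ps (S n) a.

Lemma increasing_le {A : Type} (Ps : nat -> A -> Prop) n m a :
  increasing Ps -> n <= m -> Ps n a -> Ps m a.
Proof. intros Hinc Hle Ha. induction Hle; auto. Qed.

Lemma increasing_common_index {A : Type} (Ps : nat -> A -> Prop) a b :
  increasing Ps -> seq_union Ps a -> seq_union Ps b ->
  exists k, Ps k a /\ Ps k b.
Proof.
  intros Hinc [n Ha] [m Hb]. exists (max n m).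
  split; [apply (increasing_le Ps n) | apply (increasing_le Ps m)];
    auto; lia.
Qed.

Lemma family_ext {X : Type} (P Q : family X) : (forall U, P U <-> Q U) -> P = Q.
Proof.
  intros H. apply functional_extensionality. intro U.
  apply propositional_extensionality, H.
Qed.

Lemma cl_mono {X : Type} (T : family X) (A A' : set X) x :
  (forall y, A y -> A' y) -> cl T A x -> cl T A' x.
Proof.
  intros H Hc U HU Ux. destruct (Hc U HU Ux) as [y [Uy Ay]]. eauto.
Qed.

Definition trace {X : Type} (B P : family X) : family X := fun U => P U /\ B U.

Lemma trace_seq_union {X : Type} (B : family X) (Ps : nat -> family X) :
  trace B (seq_union Ps) = seq_union (fun n => trace B (Ps n)).
Proof.
  apply family_ext. intro U. split.
  - intros [[n HU] BU]. exists n. split; assumption.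
  - intros [n [HU BU]]. split; [exists n |]; assumption.
Qed.

Definition refines_pairs {X : Type} (B P Q : family X) : Prop :=
  forall U W, P U -> P W -> (exists z, U z /\ W z) ->
    exists V, Q V /\ B V /\ (exists z, V z) /\ (forall y, V y -> U y /\ W y).

Definition B_refining {X : Type} (B P : family X) : Prop := refines_pairs B P P.

Lemma B_refining_seq_union {X : Type} (B : family X) (Ps : nat -> family X) :
  increasing Ps -> (forall n, B_refining B (Ps n)) -> B_refining B (seq_union Ps).
Proof.
  intros Hinc Href U W HU HW Hmeet.
  destruct (increasing_common_index Ps U W Hinc HU HW) as [k [HUk HWk]].
  destruct (Href k U W HUk HWk Hmeet) as [V [HV HVprop]].
  exists V. split; [exists k |]; assumption.
Qed.

Lemma sub_bang_of_trace {X : Type} (T B P : family X) :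
  fsubset P T -> sub_bang T (trace B P) B -> B_refining B P -> sub_bang T P T.
Proof.
  intros PT [_ Hbang] Href. split; [exact PT |].
  intros S SP x Hx.
  set (S' := fun V => trace B P V /\ exists U, S U /\ forall y, V y -> U y).
  assert (Hx' : ~ cl T (bigU S') x).
  { intro Hcl. apply Hx. apply (cl_mono T (bigU S')); [| exact Hcl].
    intros y [V [[_ [U [SU VU]]] Vy]]. exists U. auto. }
  destruct (Hbang S' (fun V HV => proj1 HV) x Hx') as [W [[PW BW] [Wx HW]]].
  exists W. split; [exact PW | split; [exact Wx |]].
  intros y Wy [U [SU Uy]].
  destruct (Href U W (SP U SU) PW (ex_intro _ y (conj Uy Wy)))
    as [V [PV [BV [[z Vz] VUW]]]].
  apply (HW z (proj2 (VUW z Vz))).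
  exists V. split; [| exact Vz].
  split; [split; assumption |]. exists U. split; [exact SU |].
  intros y' Vy'. apply (VUW y' Vy').
Qed.

Section ClubFromBase.

Variables (X : Type) (T B : family X) (CB : family X -> Prop).
Hypothesis hT : is_topology T.
Hypothesis hB : is_base T B.
Hypothesis hCB : is_club B CB.
Hypothesis hCB_bang : forall P, CB P -> sub_bang T P B.

Definition club_T (P : family X) : Prop :=
  ctbl_sub T P /\ CB (trace B P) /\ B_refining B P.

Lemma club_T_seq_union (Ps : nat -> family X) :
  (forall n, club_T (Ps n)) -> increasing Ps -> club_T (seq_union Ps).
Proof.
  intros HPs Hinc. destruct hCB as [_ [CB_union _]].
  split; [split | split].
  - intros U [n HU]. apply (HPs n), HU.
  - apply countable_seq_union. intro n. apply (HPs n).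
  - rewrite trace_seq_union. apply CB_union.
    + intro n. apply (HPs n).
    + intros n U [HU BU]. split; [apply Hinc |]; assumption.
  - apply B_refining_seq_union; [exact Hinc |]. intro n. apply (HPs n).
Qed.

Lemma club_T_sub_bang (P : family X) : club_T P -> sub_bang T P T.
Proof.
  intros [[PT _] [HCBP Href]].
  apply (sub_bang_of_trace T B); [exact PT | apply hCB_bang, HCBP | exact Href].
Qed.

Definition basic_refinement (U W : set X) : set X :=
  epsilon (inhabits (fun _ => False))
    (fun V => B V /\ (exists z, V z) /\ forall y, V y -> U y /\ W y).

Lemma basic_refinement_spec (U W : set X) :
  T U -> T W -> (exists z, U z /\ W z) ->
  B (basic_refinement U W) /\ (exists z, basic_refinement U W z) /\
  (forall y, basic_refinement U W y -> U y /\ W y).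
Proof.
  intros TU TW [z Hz]. unfold basic_refinement. apply epsilon_spec.
  destruct hT as [_ [_ T_meet]], hB as [_ B_base].
  destruct (B_base _ z (T_meet U W TU TW) Hz) as [V [BV [Vz VUW]]].
  exists V. eauto.
Qed.

Lemma club_step_exists (P : family X) : ctbl_sub T P ->
  exists Q, CB Q /\ fsubset (trace B P) Q /\ refines_pairs B P Q.
Proof.
  intros [PT Pcnt]. destruct hCB as [CB_sub [_ CB_cofinal]].
  set (refinements := fun V => B V /\ exists UW : set X * set X,
          (P (fst UW) /\ P (snd UW)) /\ V = basic_refinement (fst UW) (snd UW)).
  assert (Hrefinements : countable refinements).
  { eapply countable_sub.
    - apply (countable_image (fun UW : set X * set X => P (fst UW) /\ P (snd UW))
               (fun UW => basic_refinement (fst UW) (snd UW))).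
      apply countable_prod; exact Pcnt.
    - intros V [_ HV]. exact HV. }
  destruct (CB_cofinal (fun V => trace B P V \/ refinements V)) as [Q [CBQ HQ]].
  { split.
    - intros V [[_ BV] | [BV _]]; exact BV.
    - apply countable_union; [| exact Hrefinements].
      apply countable_sub with (P := P); [exact Pcnt |]. intros V [PV _]; exact PV. }
  exists Q. split; [exact CBQ | split].
  - intros V HV. apply HQ. left. exact HV.
  - intros U W PU PW Hmeet.
    destruct (basic_refinement_spec U W (PT U PU) (PT W PW) Hmeet) as [BV HV].
    exists (basic_refinement U W). split; [| split; assumption].
    apply HQ. right. split; [exact BV |]. exists (U, W). auto.
Qed.

Definition club_step (P : family X) : family X :=
  epsilon (inhabits (fun _ => False))
    (fun Q => CB Q /\ fsubset (trace B P) Q /\ refines_pairs B P Q).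

Lemma club_step_spec (P : family X) : ctbl_sub T P ->
  CB (club_step P) /\ fsubset (trace B P) (club_step P) /\
  refines_pairs B P (club_step P).
Proof. intros HP. unfold club_step. apply epsilon_spec, club_step_exists, HP. Qed.

Fixpoint closing_seq (A : family X) (n : nat) : family X :=
  match n with
  | 0 => A
  | S n => fun U => closing_seq A n U \/ club_step (closing_seq A n) U
  end.

Lemma closing_seq_increasing (A : family X) : increasing (closing_seq A).
Proof. intros n U HU. left. exact HU. Qed.

Lemma closing_seq_ctbl_sub (A : family X) n :
  ctbl_sub T A -> ctbl_sub T (closing_seq A n).
Proof.
  intros HA. induction n as [| n IH]; [exact HA |].
  destruct (club_step_spec _ IH) as [HCB _].
  destruct hCB as [CB_sub _]. destruct (CB_sub _ HCB) as [stepB stepcnt].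
  split.
  - intros U [HU | HU]; [apply IH, HU | apply (proj1 hB), stepB, HU].
  - apply countable_union; [apply IH | exact stepcnt].
Qed.

Lemma trace_closing_seq_union (A : family X) : ctbl_sub T A ->
  trace B (seq_union (closing_seq A)) =
  seq_union (fun n => club_step (closing_seq A n)).
Proof.
  intros HA. destruct hCB as [CB_sub _].
  apply family_ext. intro U. split.
  - intros [[n HU] BU]. exists n.
    apply (club_step_spec _ (closing_seq_ctbl_sub A n HA)). split; assumption.
  - intros [n HU]. split; [exists (S n); right; exact HU |].
    apply (CB_sub _ (proj1 (club_step_spec _ (closing_seq_ctbl_sub A n HA)))), HU.
Qed.

Lemma club_T_cofinal (A : family X) : ctbl_sub T A ->
  exists P, club_T P /\ fsubset A P.
Proof.
  intros HA. destruct hCB as [CB_sub [CB_union _]].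
  pose proof (fun n => club_step_spec _ (closing_seq_ctbl_sub A n HA)) as Hstep.
  exists (seq_union (closing_seq A)). split; [split; [| split] |].
  - split.
    + intros U [n HU]. apply (closing_seq_ctbl_sub A n HA), HU.
    + apply countable_seq_union. intro n. apply closing_seq_ctbl_sub, HA.
  - rewrite trace_closing_seq_union by exact HA. apply CB_union.
    + intro n. apply Hstep.
    + intros n U HU. apply (Hstep (S n)). split; [right; exact HU |].
      apply (CB_sub _ (proj1 (Hstep n))), HU.
  - intros U W [n HU] [m HW] Hmeet.
    destruct (increasing_common_index (closing_seq A) U W
                (closing_seq_increasing A) (ex_intro _ n HU) (ex_intro _ m HW))
      as [k [HUk HWk]].
    destruct (proj2 (proj2 (Hstep k)) U W HUk HWk Hmeet) as [V [HV HVprop]].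
    exists V. split; [exists (S k); right; exact HV | exact HVprop].
  - intros U HU. exists 0. exact HU.
Qed.

End ClubFromBase.

Theorem proposition2p7 (X : Type) (T : family X) (hT : is_topology T)
  (B : family X) (hB : is_base T B) (hC : contains_club T B) :
  very_I_favorable T.
Proof.
  destruct hC as [CB [hCB hCB_bang]].
  exists (club_T X T B CB). split; [split; [| split] |].
  - intros P HP. apply HP.
  - exact (club_T_seq_union _ T B CB hCB).
  - exact (club_T_cofinal _ T B CB hT hB hCB).
  - intros P HP. split; [apply HP |].
    exact (club_T_sub_bang _ T B CB (fun Q HQ => proj2 (hCB_bang Q HQ)) P HP).
Qed.
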